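(* Let $1\le m_1\le m$ be integers and let a set of $n$ jobs with processing times $p_1,\dots,p_n>0$ be given, all available at time $0$, to be processed non-preemptively on identical machines that always work at full rate. Then the minimum total completion time of the jobs on $m_1$ identical machines is at most $\left\lceil\frac{m}{m_1}\right\rceil$ times the minimum total completion time of the jobs on $m$ identical machines.
   Context: Each job is processed by exactly one machine without interruption, each machine processes one job at a time, and the total completion time is $\sum_j C_j$ where $C_j$ is the completion time of job $j$. *)

From mathcomp Require Import all_boot all_order all_algebra.
From mathcomp Require Import reals.
Set Implicit Arguments. Unset Strict Implicit. Unset Printing Implicit Defensive.
Import Order.TTheory GRing.Theory Num.Theory.
Local Open Scope ring_scope.

(* A non-preemptive schedule of n jobs (processing times p) on m identical
   machines: job j is run on machine [mach j] during [S j, S j + p j),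
   all jobs released at time 0, jobs on the same machine do not overlap. *)
Definition feasible (R : realType) (n m : nat) (p : 'I_n -> R)
  (mach : 'I_n -> 'I_m) (S : 'I_n -> R) : Prop :=
  (forall j, 0 <= S j) /\
  (forall j k, j != k -> mach j = mach k ->
     S j + p j <= S k \/ S k + p k <= S j).

Definition total_completion (R : realType) (n : nat) (p : 'I_n -> R)
  (S : 'I_n -> R) : R := \sum_(j < n) (S j + p j).

Definition is_min_tct (R : realType) (n m : nat) (p : 'I_n -> R) (c : R) : Prop :=
  (exists (mach : 'I_n -> 'I_m) (S : 'I_n -> R),
      feasible p mach S /\ total_completion p S = c) /\
  (forall (mach : 'I_n -> 'I_m) (S : 'I_n -> R),
      feasible p mach S -> c <= total_completion p S).

From mathcomp Require Import all_boot all_order all_algebra.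
From mathcomp Require Import reals zify lra.
Import Order.TTheory GRing.Theory Num.Theory.
Set Implicit Arguments. Unset Strict Implicit. Unset Printing Implicit Defensive.
Local Open Scope ring_scope.

(* Take an optimal schedule on m machines and merge old machine i into new
   machine i mod m1, so that each new machine absorbs at most ceil(m/m1) old
   ones.  On every new machine, run the jobs back to back in the order of
   their old completion times.  Job j then waits only for jobs that completed
   by C_j in the old schedule, and on each old machine these occupy at most
   C_j units of time; hence its new completion time is at most
   ceil(m/m1) C_j.  Optimal schedules exist because every feasible schedule
   is dominated by a back-to-back one, and there are finitely many of those. *)

Lemma ler_sum_sub (R : numDomainType) (I : finType) (P Q : pred I) (F : I -> R) :
  (forall i, 0 <= F i) -> (forall i, P i -> Q i) ->
  \sum_(i | P i) F i <= \sum_(i | Q i) F i.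
Proof.
move=> F_ge0 PQ; rewrite [leLHS]big_mkcond [leRHS]big_mkcond.
by apply: ler_sum => i _; case: ifP => [/PQ ->|_] //; case: ifP.
Qed.

Lemma ceil_ratio_nat (R : archiRealFieldType) (m d : nat) :
  (0 < m)%N -> (0 < d)%N ->
  Num.ceil (m%:R / d%:R : R) = (m.-1 %/ d).+1%:Z.
Proof.
move=> m_gt0 d_gt0; apply: ceil_def.
have d_gt0R : (0 : R) < d%:R by rewrite ltr0n.
rewrite -addn1 PoszD addrK !pmulrn ltr_pdivlMr // ler_pdivrMr //.
rewrite -!natrM ler_nat ltr_nat addn1; apply/andP; split.
  by apply: leq_ltn_trans (leq_divM _ _) _; rewrite prednK.
by rewrite -[X in (X <= _)%N](prednK m_gt0) ltn_ceil.
Qed.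

Lemma card_residue_class (m d r : nat) :
  (#|[pred i : 'I_m | i %% d == r]| <= (m.-1 %/ d).+1)%N.
Proof.
have quo_lt (i : 'I_m) : (i %/ d < (m.-1 %/ d).+1)%N.
  by rewrite ltnS leq_div2r // -ltnS; case: m i => [[]|m] //= i.
rewrite -[X in (_ <= X)%N]card_ord.
apply: (@leq_card_in _ _ (fun i => Ordinal (quo_lt i))) => a b.
rewrite !inE => /eqP a_r /eqP b_r [ab]; apply: val_inj.
by rewrite /= (divn_eq a d) (divn_eq b d) ab a_r b_r.
Qed.

Definition tiebreak (n : nat) (key : 'I_n -> nat) (j : 'I_n) : nat := key j * n + j.

Lemma tiebreak_inj n (key : 'I_n -> nat) : injective (tiebreak key).
Proof.
move=> j k /(congr1 (modn^~ n)); rewrite /tiebreak !modnMDl.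
by rewrite !modn_small // => /val_inj.
Qed.

Lemma tiebreak_lt_key n (key : 'I_n -> nat) k j :
  (tiebreak key k < tiebreak key j)%N -> (key k <= key j)%N.
Proof.
rewrite /tiebreak leqNgt => lt_kj; apply/negP => lt_jk.
have := ltn_ord j; have := ltn_ord k; nia.
Qed.

Definition strict_rank (R : realDomainType) n (f : 'I_n -> R) (j : 'I_n) : nat :=
  #|[pred k | f k < f j]|.

Lemma strict_rank_lt (R : realDomainType) n (f : 'I_n -> R) j :
  (strict_rank f j < n.+1)%N.
Proof. by rewrite ltnS -[X in (_ <= X)%N]card_ord max_card. Qed.

Lemma strict_rank_mono (R : realDomainType) n (f : 'I_n -> R) j k :
  f j < f k -> (strict_rank f j < strict_rank f k)%N.
Proof.
move=> lt_jk; apply/proper_card/properP; split.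
  by apply/subsetP => i; rewrite !inE => /lt_trans; apply.
by exists j; rewrite !inE ?ltxx.
Qed.

Lemma tiebreak_rank_le (R : realDomainType) n (f : 'I_n -> R) k j :
  (tiebreak (strict_rank f) k <= tiebreak (strict_rank f) j)%N -> f k <= f j.
Proof.
rewrite leq_eqVlt => /orP[/eqP/tiebreak_inj -> //|/tiebreak_lt_key].
by rewrite leqNgt leNgt; apply: contra => /strict_rank_mono.
Qed.

Section Schedules.
Variables (R : realType) (n : nat) (p : 'I_n -> R).
Hypothesis p_gt0 : forall j, 0 < p j.

Let p_ge0 j : 0 <= p j. Proof. exact: ltW. Qed.

Definition compact m (mach : 'I_n -> 'I_m) (r : 'I_n -> nat) (j : 'I_n) : R :=
  \sum_(k | (mach k == mach j) && (r k < r j)%N) p k.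

Lemma compact_completion m (mach : 'I_n -> 'I_m) r j : injective r ->
  compact mach r j + p j = \sum_(k | (mach k == mach j) && (r k <= r j)%N) p k.
Proof.
move=> r_inj; rewrite [RHS](bigD1 j) ?eqxx ?leqnn //= addrC; congr (_ + _).
apply: eq_bigl => k; case: (k =P j) => [->|/eqP neq_kj].
  by rewrite ltnn !andbF.
by rewrite andbT [(r k <= _)%N]leq_eqVlt (inj_eq r_inj) (negbTE neq_kj).
Qed.

Lemma compact_feasible m (mach : 'I_n -> 'I_m) r : injective r ->
  feasible p mach (compact mach r).
Proof.
move=> r_inj; split=> [j|j k neq_jk same_jk]; first exact: sumr_ge0.
have before k' j' : mach k' = mach j' -> (r k' < r j')%N ->
    compact mach r k' + p k' <= compact mach r j'.
  move=> same lt_kj; rewrite compact_completion // /compact same.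
  by apply: ler_sum_sub => // i /andP[-> /leq_ltn_trans ->].
have [lt_jk|lt_kj|/r_inj eq_jk] := ltngtP (r j) (r k).
- by left; apply: before.
- by right; apply: before.
- by rewrite eq_jk eqxx in neq_jk.
Qed.

Section FeasibleSchedule.
Variables (m : nat) (mach : 'I_n -> 'I_m) (S : 'I_n -> R).
Hypothesis S_feasible : feasible p mach S.

Lemma nonoverlap_before k j : k != j -> mach k = mach j -> S k <= S j ->
  S k + p k <= S j.
Proof.
move=> neq_kj same le_kj; have [] // := S_feasible.2 k j neq_kj same.
by have := p_gt0 j; lra.
Qed.

Lemma machine_load_le (i : 'I_m) (T : R) : 0 <= T ->
  \sum_(k | (mach k == i) && (S k + p k <= T)) p k <= T.
Proof.
have [N] := ubnP #|[pred k | (mach k == i) && (S k + p k <= T)]|.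
elim: N T => // N IH T; set P := [pred k | _] => card_P T_ge0.
have [k0 Pk0|P0] := pickP P; last by rewrite big_pred0.
have [l /andP[/eqP mach_l l_T] l_last] := arg_maxP S Pk0.
have P_before_l k : P k && (k != l) = (mach k == i) && (S k + p k <= S l).
  apply/andP/andP => [[Pk neq_kl]|[/eqP mach_k before_l]].
    have /andP[/eqP mach_k _] := Pk.
    split; first exact/eqP.
    by apply: nonoverlap_before; rewrite ?mach_k ?mach_l //; apply: l_last.
  have [pk_gt0 pl_gt0] := (p_gt0 k, p_gt0 l).
  split; first by rewrite inE mach_k eqxx /=; lra.
  by apply: contraTneq before_l => ->; rewrite -ltNge; lra.
have Pl : l \in P by rewrite inE mach_l eqxx.
rewrite (bigD1 l Pl) /= (eq_bigl _ _ P_before_l).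
suff : \sum_(k | (mach k == i) && (S k + p k <= S l)) p k <= S l by lra.
apply: IH; last exact: S_feasible.1.
rewrite -ltnS; apply: leq_trans card_P; rewrite [#|P|](cardD1 l) Pl add1n !ltnS.
by apply/eq_leq/eq_card => k; rewrite inE -P_before_l andbC.
Qed.

Lemma compact_le_start r : (forall k j, (r k <= r j)%N -> S k <= S j) ->
  forall j, compact mach r j <= S j.
Proof.
move=> r_S j; apply: le_trans (machine_load_le (mach j) (S_feasible.1 j)).
apply: ler_sum_sub => // k /andP[/eqP same lt_kj]; rewrite same eqxx /=.
apply: nonoverlap_before => //; last exact/r_S/ltnW.
by apply: contraTneq lt_kj => ->; rewrite ltnn.
Qed.

Lemma compact_merged_le m1 (g : 'I_m -> 'I_m1) r : injective r ->
  (forall k j, (r k <= r j)%N -> S k + p k <= S j + p j) ->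
  forall j, compact (g \o mach) r j + p j <=
    #|[pred i | g i == g (mach j)]|%:R * (S j + p j).
Proof.
move=> r_inj r_C j; rewrite compact_completion //=.
have C_ge0 : 0 <= S j + p j by rewrite addr_ge0 ?S_feasible.1.
apply: (@le_trans _ _
  (\sum_(k | (g (mach k) == g (mach j)) && (S k + p k <= S j + p j)) p k)).
  by apply: ler_sum_sub => // k /andP[-> /r_C ->].
rewrite (partition_big mach (fun i => g i == g (mach j))) /=; last first.
  by move=> k /andP[].
rewrite mulr_natl -sumr_const; apply: ler_sum => i _.
apply: le_trans (machine_load_le i C_ge0).
by apply: ler_sum_sub => // k /andP[/andP[_ ->] ->].
Qed.

End FeasibleSchedule.

Lemma min_tct_exists m : (0 < m)%N -> exists c, is_min_tct m p c.
Proof.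
move=> m_gt0.
pose code := ({ffun 'I_n -> 'I_m} * {ffun 'I_n -> 'I_n.+1})%type.
pose sched (x : code) := compact x.1 (tiebreak (fun j => val (x.2 j))).
pose x0 : code := ([ffun => Ordinal m_gt0], [ffun => ord0]).
have [x _ x_min] := arg_minP (total_completion p \o sched) (isT : xpredT x0).
exists (total_completion p (sched x)); split.
  by exists x.1, (sched x); split; last by []; apply/compact_feasible/tiebreak_inj.
move=> mach S S_feasible.
pose y : code := (finfun mach, [ffun j => inord (strict_rank S j)]).
apply: le_trans (x_min y isT) _; apply: ler_sum => j _; rewrite lerD2r.
have -> : sched y j = compact mach (tiebreak (strict_rank S)) j.
  by apply: eq_bigl => i; rewrite /tiebreak /= !ffunE !inordK ?strict_rank_lt.
by apply: compact_le_start => // k i /tiebreak_rank_le.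
Qed.

Lemma merge_machines m1 m (mach : 'I_n -> 'I_m) S : (0 < m1)%N ->
  feasible p mach S ->
  exists (mach1 : 'I_n -> 'I_m1) S1, feasible p mach1 S1 /\
    total_completion p S1 <= ((m.-1 %/ m1).+1)%:R * total_completion p S.
Proof.
move=> m1_gt0 S_feasible.
pose g (i : 'I_m) : 'I_m1 := Ordinal (ltn_pmod i m1_gt0).
pose r := tiebreak (strict_rank (fun j => S j + p j)).
exists (g \o mach), (compact (g \o mach) r); split.
  exact/compact_feasible/tiebreak_inj.
rewrite /total_completion mulr_sumr; apply: ler_sum => j _.
have r_C k i : (r k <= r i)%N -> S k + p k <= S i + p i by move/tiebreak_rank_le.
have r_inj : injective r by apply: tiebreak_inj.
apply: le_trans (compact_merged_le S_feasible g r_inj r_C j) _.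
apply: ler_wpM2r; first by rewrite addr_ge0 ?S_feasible.1.
by rewrite ler_nat card_residue_class.
Qed.

End Schedules.

Theorem claim2 (R : realType) (n m1 m : nat) (p : 'I_n -> R) :
  (forall j, 0 < p j) -> (1 <= m1)%N -> (m1 <= m)%N ->
  exists c1 c : R,
    is_min_tct m1 p c1 /\ is_min_tct m p c /\
    c1 <= (Num.ceil (m%:R / m1%:R : R))%:~R * c.
Proof.
move=> p_gt0 m1_gt0 m1_le_m; have m_gt0 := leq_trans m1_gt0 m1_le_m.
have [c1 opt1] := min_tct_exists p_gt0 m1_gt0.
have [c opt] := min_tct_exists p_gt0 m_gt0.
exists c1, c; do 2!split => //.
have [[mach [S [S_feasible <-]]] _] := opt.
have [mach1 [S1 [S1_feasible S1_le]]] := merge_machines p_gt0 m1_gt0 S_feasible.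
by rewrite ceil_ratio_nat //; apply: le_trans (opt1.2 _ _ S1_feasible) S1_le.
Qed.
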